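(* Let $\delta>0$ and $\beta:[0,+\infty)\to(0,+\infty)$ continuously differentiable, strictly decreasing, with $\lim_{S\to+\infty}\beta(S)=0$, and $\delta<\beta(0)$. Let $\chi:[0,+\infty)\to(-\infty,0]$, $\chi(y)=y\beta'(y)$, and assume (H$_1$) $\chi$ is decreasing on $[0,\beta^{-1}(\delta)]$; (H$_2$) $\chi(\beta^{-1}(\delta))<-4\delta$. Then there exists a unique $\tau^*\in(0,\bar\tau)$ such that, for $\tau\in[0,\bar\tau)$, the inequality $$\frac{4\delta e^{-\delta\tau}}{2e^{-\delta\tau}-1}+(2e^{-\delta\tau}-1)\,\chi\!\left(\beta^{-1}\!\Big(\frac{\delta}{2e^{-\delta\tau}-1}\Big)\right)<0$$ holds if and only if $\tau\in[0,\tau^* )$.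
   Context: $\bar\tau:=\frac1\delta\ln\!\big(\frac{2\beta(0)}{\delta+\beta(0)}\big)$; $\beta^{-1}:(0,\beta(0)]\to[0,\infty)$ is the inverse function of $\beta$. For $\tau\in[0,\bar\tau)$ one has $2e^{-\delta\tau}-1>0$ and $\delta\le \frac{\delta}{2e^{-\delta\tau}-1}<\beta(0)$. *)

From Stdlib Require Import Reals.
Open Scope R_scope.

Definition right_deriv_lim (f : R -> R) (x l : R) : Prop :=
  forall eps : R, 0 < eps -> exists delta : R, 0 < delta /\
    forall h : R, 0 < h < delta -> Rabs ((f (x + h) - f x) / h - l) < eps.

Definition deriv_on_nonneg (f f' : R -> R) : Prop :=
  right_deriv_lim f 0 (f' 0) /\
  forall y : R, 0 < y -> derivable_pt_lim f y (f' y).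

(* g continuous on [0,+oo) (relative to [0,+oo)). *)
Definition cont_on_nonneg (g : R -> R) : Prop :=
  forall y : R, 0 <= y -> continuity_pt (fun z => g (Rmax 0 z)) y.

Definition tau_bar (beta : R -> R) (delta : R) : R :=
  / delta * ln (2 * beta 0 / (delta + beta 0)).

(* The expression of the lemma, with chi y = y * beta'(y), binv = beta^{-1}. *)
Definition lhs5 (beta' binv : R -> R) (delta tau : R) : R :=
  let q := 2 * exp (- delta * tau) - 1 in
  4 * delta * exp (- delta * tau) / q
  + q * ((fun y => y * beta' y) (binv (delta / q))).

From Stdlib Require Import Reals Lra Classical.
Open Scope R_scope.

(* Put q(tau) = 2 e^{-delta tau} - 1 and s(tau) = delta / q(tau).
   On [0, tau_bar) the factor q is positive and s increases bijectively onto
   [delta, beta 0), and the expression of the lemma factors as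
   q(tau) * F(s(tau)) with
        F(s) = 2 s (delta + s) / delta + chi(beta^{-1} s).
   By (H1) and the monotonicity of beta^{-1}, F is strictly increasing on
   [delta, beta 0]; by (H2), F(delta) < 0; by continuity of chi at 0 and
   beta^{-1}(s) -> 0 as s -> beta 0, F becomes positive near beta 0; and the
   right-continuity of beta^{-1} makes {F < 0} open to the right.  A general
   threshold lemma (a strictly increasing function that starts negative, is
   somewhere nonnegative and has a right-open negativity set is negative
   exactly on an initial segment [a, m)) applied to F o s gives tau_star; its
   uniqueness holds for any predicate that is characterized by a threshold.
   The file develops, in order: the two threshold lemmas, continuity of chi,
   the change of variable tau |-> s, and the properties of F; lemma5p2 then
   combines them. *)

Section Threshold.

Variables (a b : R) (g : R -> R).

Hypothesis g_increasing : forall t1 t2, a <= t1 -> t1 < t2 -> t2 < b -> g t1 < g t2.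
Hypothesis g_start : g a < 0.
Hypothesis g_right_open :
  forall t, a <= t < b -> g t < 0 -> exists t', t < t' < b /\ g t' < 0.
Hypothesis g_somewhere_nonneg : exists t1, a <= t1 < b /\ 0 <= g t1.

(* The negativity set of g is an interval [a, m), with m the supremum of the
   set of points where g is negative. *)
Lemma threshold_exists :
  exists m, a < m < b /\ forall t, a <= t < b -> (g t < 0 <-> t < m).
Proof.
  destruct g_somewhere_nonneg as [t1 [[Ht1a Ht1b] Hg1]].
  set (E := fun t => a <= t < b /\ g t < 0).
  assert (HEa : E a) by (split; [lra | exact g_start]).
  assert (Hbound : is_upper_bound E t1).
  { intros e [He Hge]. destruct (Rle_dec e t1) as [| Hlt]; [assumption |].
    apply Rnot_le_lt in Hlt. pose proof (g_increasing t1 e ltac:(lra) ltac:(lra) ltac:(lra)). lra. }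
  destruct (completeness E (ex_intro _ t1 Hbound) (ex_intro _ a HEa))
    as [m [Hup Hleast]].
  assert (Hm_t1 : m <= t1) by exact (Hleast t1 Hbound).
  assert (Hm_a : a < m).
  { destruct (g_right_open a ltac:(lra) g_start) as [t' [[Ht'a Ht'b] Hg']].
    assert (Et' : E t') by (split; [split; lra | exact Hg']).
    pose proof (Hup t' Et'). lra. }
  exists m. split; [lra |]. intros t Ht. split; intro Hgt.
  - (* t is below m, and t = m is excluded by right-openness *)
    destruct (Hup t (conj Ht Hgt)) as [| Heq]; [assumption | subst t].
    destruct (g_right_open m Ht Hgt) as [t' [[Ht'a Ht'b] Hg']].
    assert (Et' : E t') by (split; [split; lra | exact Hg']).
    pose proof (Hup t' Et'). lra.
  - (* some point of E lies beyond t, otherwise t would bound E *)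
    destruct (classic (exists e, E e /\ t < e)) as [[e [[He Hge] Hte]] | Hnone].
    + pose proof (g_increasing t e ltac:(lra) Hte ltac:(lra)). lra.
    + assert (Htb : is_upper_bound E t).
      { intros x Ex. destruct (Rle_dec x t) as [| Hxt]; [assumption |].
        exfalso. apply Hnone. exists x. split; [exact Ex | apply Rnot_le_lt; exact Hxt]. }
      pose proof (Hleast t Htb). lra.
Qed.

End Threshold.

Lemma threshold_unique (a b m1 m2 : R) (Q : R -> Prop) :
  a < m1 < b -> a < m2 < b ->
  (forall t, a <= t < b -> (Q t <-> t < m1)) ->
  (forall t, a <= t < b -> (Q t <-> t < m2)) -> m1 = m2.
Proof.
  intros Hm1 Hm2 HQ1 HQ2.
  destruct (Rtotal_order m1 m2) as [Hlt | [Heq | Hgt]]; [| assumption |]; exfalso.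
  - assert (Hmid : a <= (m1 + m2) / 2 < b) by lra.
    pose proof (proj2 (HQ2 _ Hmid) ltac:(lra)) as HQ.
    apply (HQ1 _ Hmid) in HQ. lra.
  - assert (Hmid : a <= (m1 + m2) / 2 < b) by lra.
    pose proof (proj2 (HQ1 _ Hmid) ltac:(lra)) as HQ.
    apply (HQ2 _ Hmid) in HQ. lra.
Qed.

Lemma continuity_pt_ball (f : R -> R) (x eps : R) :
  continuity_pt f x -> 0 < eps ->
  exists a, 0 < a /\ forall z, Rabs (z - x) < a -> Rabs (f z - f x) < eps.
Proof.
  intros Hc He. destruct (Hc eps He) as [a [Ha Hz]]. exists a. split; [lra |].
  intros z Hzx. destruct (Req_dec z x) as [-> | Hne].
  - unfold Rminus. rewrite Rplus_opp_r, Rabs_R0. lra.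
  - apply (Hz z). split; [split; [exact I | auto] | exact Hzx].
Qed.

Lemma chi_continuous (beta' : R -> R) (y eps : R) :
  cont_on_nonneg beta' -> 0 <= y -> 0 < eps ->
  exists eta, 0 < eta /\ forall z, 0 <= z -> Rabs (z - y) < eta ->
    Rabs (z * beta' z - y * beta' y) < eps.
Proof.
  intros Hcont Hy He.
  assert (Hc : continuity_pt (fun z => z * beta' (Rmax 0 z)) y).
  { exact (continuity_pt_mult id (fun z => beta' (Rmax 0 z)) y
             (derivable_continuous_pt id y (derivable_pt_id y)) (Hcont y Hy)). }
  destruct (continuity_pt_ball _ y eps Hc He) as [eta [Heta Hball]].
  exists eta. split; [exact Heta |]. intros z Hz Hzy.
  specialize (Hball z Hzy). cbv beta in Hball.
  rewrite !Rmax_right in Hball by assumption. exact Hball.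
Qed.

Definition qfac (delta t : R) : R := 2 * exp (- delta * t) - 1.
Definition svar (delta t : R) : R := delta / qfac delta t.

Definition Fred (delta : R) (beta' binv : R -> R) (s : R) : R :=
  2 * s * (delta + s) / delta + binv s * beta' (binv s).

Lemma lhs5_factor (delta : R) (beta' binv : R -> R) (t : R) :
  delta <> 0 -> qfac delta t <> 0 ->
  lhs5 beta' binv delta t = qfac delta t * Fred delta beta' binv (svar delta t).
Proof.
  intros Hd Hq. unfold lhs5, Fred, svar. cbv zeta. unfold qfac in *. field. tauto.
Qed.

Section ChangeOfVariable.

Variables (delta : R) (beta : R -> R).
Hypothesis Hdelta : 0 < delta.
Hypothesis Hdb : delta < beta 0.

Lemma exp_tau_bar :
  exp (- delta * tau_bar beta delta) = (delta + beta 0) / (2 * beta 0).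
Proof.
  unfold tau_bar.
  replace (- delta * (/ delta * ln (2 * beta 0 / (delta + beta 0))))
    with (- ln (2 * beta 0 / (delta + beta 0))) by (field; lra).
  rewrite exp_Ropp, exp_ln by (apply Rdiv_lt_0_compat; lra). field. lra.
Qed.

Lemma qfac_range (t : R) :
  0 <= t < tau_bar beta delta -> delta / beta 0 < qfac delta t <= 1.
Proof.
  intros [Ht0 Ht1]. unfold qfac. split.
  - assert (Hexp : exp (- delta * tau_bar beta delta) < exp (- delta * t))
      by (apply exp_increasing; nra).
    rewrite exp_tau_bar in Hexp.
    replace (delta / beta 0) with (2 * ((delta + beta 0) / (2 * beta 0)) - 1)
      by (field; lra). lra.
  - assert (Hexp : exp (- delta * t) <= exp 0).
    { destruct Ht0 as [Hlt | <-]; [left; apply exp_increasing; nra |].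
      rewrite Rmult_0_r. lra. }
    rewrite exp_0 in Hexp. lra.
Qed.

Lemma qfac_pos (t : R) : 0 <= t < tau_bar beta delta -> 0 < qfac delta t.
Proof.
  intro Ht. pose proof (qfac_range t Ht).
  assert (0 < delta / beta 0) by (apply Rdiv_lt_0_compat; lra). lra.
Qed.

Lemma svar_range (t : R) :
  0 <= t < tau_bar beta delta -> delta <= svar delta t < beta 0.
Proof.
  intro Ht. destruct (qfac_range t Ht) as [Hlo Hhi]. pose proof (qfac_pos t Ht) as Hq.
  unfold svar. split.
  - apply (Rmult_le_reg_r (qfac delta t)); [exact Hq |].
    unfold Rdiv. rewrite Rmult_assoc, Rinv_l by lra. nra.
  - apply (Rmult_lt_reg_r (qfac delta t)); [exact Hq |].
    unfold Rdiv. rewrite Rmult_assoc, Rinv_l by lra.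
    apply (Rmult_lt_compat_l (beta 0)) in Hlo; [| lra].
    replace (beta 0 * (delta / beta 0)) with delta in Hlo by (field; lra). lra.
Qed.

Lemma svar_increasing (t1 t2 : R) :
  0 <= t1 -> t1 < t2 -> t2 < tau_bar beta delta -> svar delta t1 < svar delta t2.
Proof.
  intros H0 H12 H2.
  pose proof (qfac_pos t1 ltac:(lra)) as Hq1. pose proof (qfac_pos t2 ltac:(lra)) as Hq2.
  assert (Hq : qfac delta t2 < qfac delta t1).
  { unfold qfac. assert (exp (- delta * t2) < exp (- delta * t1))
      by (apply exp_increasing; nra). lra. }
  unfold svar, Rdiv. apply Rmult_lt_compat_l; [lra |]. apply Rinv_lt_contravar; nra.
Qed.

(* s maps [0, tau_bar) onto [delta, beta 0); the preimage of x is
   -ln((delta + x) / (2 x)) / delta. *)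
Lemma svar_onto (x : R) :
  delta <= x < beta 0 -> exists t, 0 <= t < tau_bar beta delta /\ svar delta t = x.
Proof.
  intro Hx. set (k := (delta + x) / (2 * x)).
  assert (Hk : 0 < k) by (apply Rdiv_lt_0_compat; lra).
  assert (Hexp : exp (- delta * (- ln k / delta)) = k).
  { replace (- delta * (- ln k / delta)) with (ln k) by (field; lra). apply exp_ln, Hk. }
  assert (Hk1 : k <= 1).
  { unfold k. apply (Rmult_le_reg_r (2 * x)); [lra |].
    unfold Rdiv. rewrite Rmult_assoc, Rinv_l by lra. lra. }
  assert (Hk2 : (delta + beta 0) / (2 * beta 0) < k).
  { unfold k. apply (Rmult_lt_reg_r (2 * x * (2 * beta 0))); [nra |].
    replace ((delta + beta 0) / (2 * beta 0) * (2 * x * (2 * beta 0)))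
      with ((delta + beta 0) * (2 * x)) by (field; lra).
    replace ((delta + x) / (2 * x) * (2 * x * (2 * beta 0)))
      with ((delta + x) * (2 * beta 0)) by (field; lra). nra. }
  exists (- ln k / delta). split; [split |].
  - destruct (Rle_dec 0 (- ln k / delta)) as [| Hneg]; [assumption |].
    assert (Hlt : exp 0 < exp (- delta * (- ln k / delta)))
      by (apply exp_increasing; apply Rnot_le_lt in Hneg; nra).
    rewrite Hexp, exp_0 in Hlt. lra.
  - destruct (Rlt_dec (- ln k / delta) (tau_bar beta delta)) as [| Hge]; [assumption |].
    apply Rnot_lt_le in Hge.
    assert (Hle : exp (- delta * (- ln k / delta)) <= exp (- delta * tau_bar beta delta)).
    { destruct Hge as [Hlt | Heq]; [left; apply exp_increasing; nra | rewrite Heq; lra]. }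
    rewrite Hexp, exp_tau_bar in Hle. lra.
  - unfold svar, qfac. rewrite Hexp. unfold k. field. lra.
Qed.

Lemma svar_lt_reflect (t1 t2 : R) :
  0 <= t1 < tau_bar beta delta -> 0 <= t2 < tau_bar beta delta ->
  svar delta t1 < svar delta t2 -> t1 < t2.
Proof.
  intros [Ht1a Ht1b] [Ht2a Ht2b] Hs.
  destruct (Rtotal_order t1 t2) as [| [-> | Hgt]]; [assumption | lra |].
  pose proof (svar_increasing t2 t1 Ht2a Hgt Ht1b). lra.
Qed.

(* Since q > 0 on [0, tau_bar), the expression of the lemma has the sign of
   F(s(tau)). *)
Lemma lhs5_neg_iff (beta' binv : R -> R) (t : R) :
  0 <= t < tau_bar beta delta ->
  (lhs5 beta' binv delta t < 0 <-> Fred delta beta' binv (svar delta t) < 0).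
Proof.
  intro Ht. pose proof (qfac_pos t Ht) as Hq.
  rewrite lhs5_factor by lra. split; intro Hneg; nra.
Qed.

End ChangeOfVariable.

Section Reduced.

Variables (delta : R) (beta beta' binv : R -> R).
Hypothesis Hdelta : 0 < delta.
Hypothesis Hdb : delta < beta 0.
Hypothesis Hcont : cont_on_nonneg beta'.
Hypothesis Hdec : forall x y, 0 <= x -> x < y -> beta y < beta x.
Hypothesis Hinv : forall y, 0 < y <= beta 0 -> 0 <= binv y /\ beta (binv y) = y.
Hypothesis H1 : forall x y, 0 <= x -> x <= y -> y <= binv delta ->
  y * beta' y <= x * beta' x.
Hypothesis H2 : binv delta * beta' (binv delta) < -4 * delta.

Lemma beta_nonincreasing (x y : R) : 0 <= x -> x <= y -> beta y <= beta x.
Proof.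
  intros Hx [Hlt | <-]; [left; apply Hdec | right]; auto.
Qed.

Lemma binv_antitone (u v : R) : 0 < u -> u <= v -> v <= beta 0 -> binv v <= binv u.
Proof.
  intros Hu Huv Hv.
  destruct (Hinv u ltac:(split; lra)) as [Hu0 Hbu]. destruct (Hinv v ltac:(split; lra)) as [Hv0 Hbv].
  destruct (Rle_dec (binv v) (binv u)) as [| Hgt]; [assumption |].
  apply Rnot_le_lt in Hgt. pose proof (Hdec _ _ Hu0 Hgt). lra.
Qed.

Lemma binv_right_continuous (s0 eta : R) :
  0 < s0 < beta 0 -> 0 < eta ->
  exists h, 0 < h /\ s0 + h < beta 0 /\
    forall s, s0 <= s <= s0 + h -> Rabs (binv s - binv s0) < eta.
Proof.
  intros Hs0 Heta. destruct (Hinv s0 ltac:(split; lra)) as [Hy0 Hby0].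
  assert (Hy0pos : 0 < binv s0).
  { destruct Hy0 as [| Heq]; [assumption |]. rewrite <- Heq in Hby0. lra. }
  set (x0 := binv s0 - Rmin (binv s0) eta / 2).
  pose proof (Rmin_l (binv s0) eta). pose proof (Rmin_r (binv s0) eta).
  assert (0 < Rmin (binv s0) eta) by (apply Rmin_glb_lt; assumption).
  assert (Hx0 : 0 < x0 < binv s0) by (unfold x0; lra).
  assert (Hbx0 : s0 < beta x0) by (rewrite <- Hby0 at 1; apply Hdec; lra).
  set (h := Rmin (beta x0 - s0) (beta 0 - s0) / 2).
  pose proof (Rmin_l (beta x0 - s0) (beta 0 - s0)).
  pose proof (Rmin_r (beta x0 - s0) (beta 0 - s0)).
  assert (0 < Rmin (beta x0 - s0) (beta 0 - s0)) by (apply Rmin_glb_lt; lra).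
  exists h. split; [| split]; [unfold h; lra | unfold h; lra |].
  intros s Hs. destruct (Hinv s ltac:(unfold h in *; split; lra)) as [Hz0 Hbz].
  assert (Hle : binv s <= binv s0) by (apply binv_antitone; unfold h in *; lra).
  assert (Hgt : x0 < binv s).
  { destruct (Rlt_dec x0 (binv s)) as [| Hge]; [assumption |].
    apply Rnot_lt_le in Hge. pose proof (beta_nonincreasing _ _ Hz0 Hge).
    unfold h in *. lra. }
  apply Rabs_def1; unfold x0 in *; lra.
Qed.

Lemma binv_small_near_top (eta s : R) :
  0 < eta -> 0 < s -> beta eta < s <= beta 0 -> binv s < eta.
Proof.
  intros Heta Hs Hbs. destruct (Hinv s ltac:(split; lra)) as [Hs0 Hbinv].
  destruct (Rlt_dec (binv s) eta) as [| Hge]; [assumption |].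
  apply Rnot_lt_le in Hge. pose proof (beta_nonincreasing eta (binv s) ltac:(lra) Hge). lra.
Qed.

Notation F := (Fred delta beta' binv).

(* F is strictly increasing: its polynomial part increases, and chi o beta^{-1}
   is nondecreasing by (H1) since beta^{-1} is decreasing. *)
Lemma Fred_increasing (u v : R) : delta <= u -> u < v -> v <= beta 0 -> F u < F v.
Proof.
  intros Hu Huv Hv. unfold Fred.
  destruct (Hinv v ltac:(split; lra)) as [Hv0 _].
  assert (Hchi : binv u * beta' (binv u) <= binv v * beta' (binv v)).
  { apply H1; [exact Hv0 | apply binv_antitone | apply binv_antitone]; lra. }
  assert (Hpoly : 2 * u * (delta + u) / delta < 2 * v * (delta + v) / delta).
  { unfold Rdiv. apply Rmult_lt_compat_r; [apply Rinv_0_lt_compat |]; nra. }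
  lra.
Qed.

(* (H2) says exactly that F is negative at delta. *)
Lemma Fred_at_delta : F delta < 0.
Proof.
  unfold Fred. replace (2 * delta * (delta + delta) / delta) with (4 * delta)
    by (field; lra). lra.
Qed.

(* Negativity of F persists slightly to the right, by continuity of the
   polynomial part and of chi, and right-continuity of beta^{-1}. *)
Lemma Fred_right_open (s0 : R) :
  delta <= s0 < beta 0 -> F s0 < 0 -> exists s1, s0 < s1 < beta 0 /\ F s1 < 0.
Proof.
  intros Hs0 HF. set (eps := - F s0 / 3).
  assert (Heps : 0 < eps) by (unfold eps; lra).
  destruct (Hinv s0 ltac:(split; lra)) as [Hy0 _].
  destruct (chi_continuous beta' (binv s0) eps Hcont Hy0 Heps) as [eta [Heta Hchi]].
  destruct (binv_right_continuous s0 eta ltac:(split; lra) Heta) as [h [Hh [Hhb Hbinv]]].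
  assert (Hpoly : continuity_pt (fun s => 2 * s * (delta + s) / delta) s0) by reg.
  destruct (continuity_pt_ball _ s0 eps Hpoly Heps) as [al [Hal Hpolyc]].
  pose proof (Rmin_l h al). pose proof (Rmin_r h al).
  assert (0 < Rmin h al) by (apply Rmin_glb_lt; assumption).
  set (k := Rmin h al / 2).
  exists (s0 + k). split; [unfold k; split; lra |].
  destruct (Hinv (s0 + k) ltac:(unfold k; split; lra)) as [Hz0 _].
  assert (A1 : Rabs (binv (s0 + k) * beta' (binv (s0 + k)) - binv s0 * beta' (binv s0)) < eps)
    by (apply Hchi; [exact Hz0 | apply Hbinv; unfold k; lra]).
  assert (A2 : Rabs (2 * (s0 + k) * (delta + (s0 + k)) / delta
                      - 2 * s0 * (delta + s0) / delta) < eps)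
    by (apply Hpolyc; apply Rabs_def1; unfold k; lra).
  apply Rabs_def2 in A1. apply Rabs_def2 in A2.
  unfold eps, Fred in *. lra.
Qed.

(* Near beta 0, beta^{-1} is close to 0, so chi(beta^{-1} s) > -4 delta while
   the polynomial part exceeds its value 4 delta at delta: F becomes positive. *)
Lemma Fred_eventually_positive : exists s, delta <= s < beta 0 /\ 0 < F s.
Proof.
  assert (H4 : 0 < 4 * delta) by lra.
  destruct (chi_continuous beta' 0 (4 * delta) Hcont (Rle_refl 0) H4) as [eta [Heta Hchi]].
  assert (Hbeta : beta eta < beta 0) by (apply Hdec; lra).
  pose proof (Rmax_l (beta eta) delta). pose proof (Rmax_r (beta eta) delta).
  set (m := Rmax (beta eta) delta) in *.
  assert (Hm : m < beta 0) by (apply Rmax_lub_lt; lra).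
  set (s := (m + beta 0) / 2).
  exists s. split; [unfold s; split; lra |].
  destruct (Hinv s ltac:(unfold s; split; lra)) as [Hz0 _].
  assert (Hsmall : binv s < eta) by (apply binv_small_near_top; unfold s; lra).
  assert (A : Rabs (binv s * beta' (binv s) - 0 * beta' 0) < 4 * delta)
    by (apply Hchi; [exact Hz0 | apply Rabs_def1; lra]).
  rewrite Rmult_0_l, Rminus_0_r in A. apply Rabs_def2 in A.
  assert (Hpoly : 4 * delta < 2 * s * (delta + s) / delta).
  { apply (Rmult_lt_reg_r delta); [lra |].
    replace (2 * s * (delta + s) / delta * delta) with (2 * s * (delta + s)) by (field; lra).
    unfold s. nra. }
  unfold Fred. lra.
Qed.

Lemma reduced_threshold :
  exists m, 0 < m < tau_bar beta delta /\
    forall t, 0 <= t < tau_bar beta delta -> (F (svar delta t) < 0 <-> t < m).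
Proof.
  apply threshold_exists.
  - intros t1 t2 Ht1 H12 Ht2. apply Fred_increasing.
    + apply (svar_range delta beta Hdelta Hdb t1); lra.
    + apply (svar_increasing delta beta Hdelta Hdb); assumption.
    + left. apply (svar_range delta beta Hdelta Hdb t2); lra.
  - unfold svar, qfac. rewrite Rmult_0_r, exp_0.
    replace (delta / (2 * 1 - 1)) with delta by field. exact Fred_at_delta.
  - intros t Ht HF.
    pose proof (svar_range delta beta Hdelta Hdb t Ht) as Hst.
    destruct (Fred_right_open (svar delta t) Hst HF) as [s1 [Hs1 HF1]].
    destruct (svar_onto delta beta Hdelta Hdb s1 ltac:(split; lra)) as [t' [Ht' <-]].
    exists t'. split; [split |]; [| lra | exact HF1].
    exact (svar_lt_reflect delta beta Hdelta Hdb t t' Ht Ht' (proj1 Hs1)).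
  - destruct Fred_eventually_positive as [s [Hs Hpos]].
    destruct (svar_onto delta beta Hdelta Hdb s Hs) as [t [Ht <-]].
    exists t. split; [exact Ht | lra].
Qed.

End Reduced.

Theorem lemma5p2 (delta : R) (beta beta' binv : R -> R)
  (Hdelta : 0 < delta)
  (Hpos : forall S, 0 <= S -> 0 < beta S)
  (Hder : deriv_on_nonneg beta beta')
  (Hcont : cont_on_nonneg beta')
  (Hdec : forall x y, 0 <= x -> x < y -> beta y < beta x)
  (Hlim : forall eps, 0 < eps -> exists M, forall S, M <= S -> Rabs (beta S) < eps)
  (Hdb : delta < beta 0)
  (Hinv : forall y, 0 < y <= beta 0 -> 0 <= binv y /\ beta (binv y) = y)
  (H1 : forall x y, 0 <= x -> x <= y -> y <= binv delta ->
          y * beta' y <= x * beta' x)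
  (H2 : binv delta * beta' (binv delta) < -4 * delta) :
  exists tau_star : R,
    (0 < tau_star < tau_bar beta delta /\
     forall tau, 0 <= tau < tau_bar beta delta ->
       (lhs5 beta' binv delta tau < 0 <-> tau < tau_star)) /\
    (forall t', 0 < t' < tau_bar beta delta ->
       (forall tau, 0 <= tau < tau_bar beta delta ->
          (lhs5 beta' binv delta tau < 0 <-> tau < t')) -> t' = tau_star).
Proof.
  destruct (reduced_threshold delta beta beta' binv Hdelta Hdb Hcont Hdec Hinv H1 H2)
    as [m [Hm Hchar]].
  assert (Hthreshold : forall tau, 0 <= tau < tau_bar beta delta ->
            (lhs5 beta' binv delta tau < 0 <-> tau < m)).
  { intros tau Htau. rewrite (lhs5_neg_iff delta beta Hdelta Hdb beta' binv tau Htau).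
    exact (Hchar tau Htau). }
  exists m. split; [split; assumption |].
  intros t' Ht' Hthreshold'.
  exact (threshold_unique 0 (tau_bar beta delta) t' m _ Ht' Hm Hthreshold' Hthreshold).
Qed.
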